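(* Let $(X,\tau_1,\tau_2)$ be a bitopological space, $i,j\in\{1,2\}$, $i\neq j$, which is $(i,j)$-almost regular, $(j,i)$-extremely disconnected and a $j$-$P$-space. If $X$ is $(i,j)_1$-almost paralindelöf, then $X$ is $(i,j)_1$-nearly paralindelöf.
   Context: $(X,\tau_1,\tau_2)$ is a bitopological space and $i,j\in\{1,2\}$, $i\neq j$. For $k\in\{1,2\}$, $k\text{-}\mathrm{int}$ and $k\text{-}\mathrm{cl}$ denote interior and closure with respect to $\tau_k$; ''$k$-open'' means $\tau_k$-open. A set $A$ is $(i,j)$-regular open if $A=i\text{-}\mathrm{int}(j\text{-}\mathrm{cl}(A))$. $X$ is $(i,j)$-almost regular if for each $x\in X$ and each $(i,j)$-regular open set $U$ containing $x$ there is an $(i,j)$-regular open set $V$ with $x\in V\subseteq j\text{-}\mathrm{cl}(V)\subseteq U$. $X$ is $(j,i)$-extremely disconnected if $j\text{-}\mathrm{cl}(W)$ is $i$-open for every $i$-open set $W$. A family $\mathcal V$ refines $\mathcal U$ if each member of $\mathcal V$ is contained in some member of $\mathcal U$; a family is a cover of $X$ if its union is $X$. A family is $k$-locally countable if every $x\in X$ has a $k$-open neighbourhood meeting at most countably many of its members. $X$ is a $k$-$P$-space if every intersection of countably many $k$-open sets is $k$-open. $X$ is $(i,j)_1$-almost paralindelöf if for every cover $\mathcal U$ of $X$ by $i$-open sets there is a $j$-locally countable family $\mathcal V$ of $i$-open sets refining $\mathcal U$ such that $X=\bigcup\{j\text{-}\mathrm{cl}(V):V\in\mathcal V\}$. $X$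 is $(i,j)_1$-nearly paralindelöf if every cover of $X$ by $(i,j)$-regular open sets has a refinement which is a cover of $X$ by $i$-open sets and which is $j$-locally countable. *)

From Stdlib Require Import Arith.

(* Subsets of X are predicates X -> Prop; a topology is given by its
   predicate "is open" on subsets. *)
Definition is_topology {X : Type} (t : (X -> Prop) -> Prop) : Prop :=
  (forall A B : X -> Prop, (forall x, A x <-> B x) -> t A -> t B) /\
  t (fun _ => True) /\
  (forall A B, t A -> t B -> t (fun x => A x /\ B x)) /\
  (forall F : (X -> Prop) -> Prop, (forall A, F A -> t A) ->
     t (fun x => exists A, F A /\ A x)).

Definition interior {X : Type} (t : (X -> Prop) -> Prop) (A : X -> Prop) : X -> Prop :=
  fun x => exists U, t U /\ U x /\ (forall y, U y -> A y).

Definition closure {X : Type} (t : (X -> Prop) -> Prop) (A : X -> Prop) : X -> Prop :=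
  fun x => forall U, t U -> U x -> exists y, U y /\ A y.

Definition regular_open {X : Type} (ti tj : (X -> Prop) -> Prop) (A : X -> Prop) : Prop :=
  forall x, A x <-> interior ti (closure tj A) x.

Definition almost_regular {X : Type} (ti tj : (X -> Prop) -> Prop) : Prop :=
  forall (x : X) (U : X -> Prop), regular_open ti tj U -> U x ->
    exists V, regular_open ti tj V /\ V x /\
      (forall y, V y -> closure tj V y) /\ (forall y, closure tj V y -> U y).

Definition extremely_disconnected {X : Type} (tj ti : (X -> Prop) -> Prop) : Prop :=
  forall W : X -> Prop, ti W -> ti (closure tj W).

Definition P_space {X : Type} (t : (X -> Prop) -> Prop) : Prop :=
  forall U : nat -> X -> Prop, (forall n, t (U n)) -> t (fun x => forall n, U n x).

Definition countable_family {X : Type} (S : (X -> Prop) -> Prop) : Prop :=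
  exists f : (X -> Prop) -> nat, forall A B, S A -> S B -> f A = f B -> A = B.

Definition locally_countable {X : Type} (t : (X -> Prop) -> Prop)
  (F : (X -> Prop) -> Prop) : Prop :=
  forall x : X, exists W, t W /\ W x /\
    countable_family (fun V => F V /\ exists y, W y /\ V y).

Definition refines {X : Type} (V U : (X -> Prop) -> Prop) : Prop :=
  forall A, V A -> exists B, U B /\ (forall x, A x -> B x).

Definition is_cover {X : Type} (F : (X -> Prop) -> Prop) : Prop :=
  forall x : X, exists A, F A /\ A x.

Definition almost_paralindelof {X : Type} (ti tj : (X -> Prop) -> Prop) : Prop :=
  forall U : (X -> Prop) -> Prop, (forall A, U A -> ti A) -> is_cover U ->
    exists V : (X -> Prop) -> Prop,
      (forall A, V A -> ti A) /\ locally_countable tj V /\ refines V U /\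
      (forall x, exists A, V A /\ closure tj A x).

Definition nearly_paralindelof {X : Type} (ti tj : (X -> Prop) -> Prop) : Prop :=
  forall U : (X -> Prop) -> Prop, (forall A, U A -> regular_open ti tj A) -> is_cover U ->
    exists V : (X -> Prop) -> Prop,
      refines V U /\ is_cover V /\ (forall A, V A -> ti A) /\ locally_countable tj V.

Definition tau {X : Type} (t1 t2 : (X -> Prop) -> Prop) (k : nat) : (X -> Prop) -> Prop :=
  if Nat.eqb k 1 then t1 else t2.

(* The closures of an almost paralindelöf refinement do the job.  By almost
   regularity the regular open sets whose j-closure lies inside a member of the
   given cover again form a cover by i-open sets; refine it by an i-open,
   j-locally countable family V whose j-closures cover X.  Then the j-closures
   of the members of V refine the original cover, they are i-open by
   (j,i)-extremal disconnectedness, and they are j-locally countable because a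
   j-open set meets cl A only if it meets A. *)
From Stdlib Require Import Arith ClassicalEpsilon.

Lemma tau_topology (X : Type) (t1 t2 : (X -> Prop) -> Prop) (k : nat) :
  is_topology t1 -> is_topology t2 -> is_topology (tau t1 t2 k).
Proof. intros; unfold tau; destruct (Nat.eqb k 1); assumption. Qed.

Lemma regular_open_open (X : Type) (ti tj : (X -> Prop) -> Prop) (A : X -> Prop) :
  is_topology ti -> regular_open ti tj A -> ti A.
Proof.
  intros [Hext [_ [_ Hunion]]] HA.
  apply (Hext (fun x => exists B, (ti B /\ forall y, B y -> closure tj A y) /\ B x)).
  - intros x; split.
    + intros [B [[HB HBA] Bx]]. apply HA. exists B; auto.
    + intros Ax. apply HA in Ax. destruct Ax as [B [HB [Bx HBA]]]. exists B; auto.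
  - apply Hunion. intros B [HB _]; exact HB.
Qed.

Lemma closure_monotone (X : Type) (t : (X -> Prop) -> Prop) (A B : X -> Prop) :
  (forall x, A x -> B x) -> forall x, closure t A x -> closure t B x.
Proof.
  intros HAB x Hx G HG Gx. destruct (Hx G HG Gx) as [y [Gy Ay]]. eauto.
Qed.

Lemma countable_family_image (X Y : Type) (S : (X -> Prop) -> Prop)
  (h : (X -> Prop) -> (Y -> Prop)) :
  countable_family S -> countable_family (fun C => exists A, S A /\ C = h A).
Proof.
  intros [f Hf].
  exists (fun C => match excluded_middle_informative (exists A, S A /\ C = h A) with
           | left e => f (proj1_sig (constructive_indefinite_description _ e))
           | right _ => 0 end).
  intros C D HC HD.
  destruct (excluded_middle_informative (exists A, S A /\ C = h A)) as [eC|];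
    [|contradiction].
  destruct (excluded_middle_informative (exists A, S A /\ D = h A)) as [eD|];
    [|contradiction].
  destruct (constructive_indefinite_description _ eC) as [A [SA ->]].
  destruct (constructive_indefinite_description _ eD) as [B [SB ->]].
  simpl. intros HfAB. rewrite (Hf A B SA SB HfAB). reflexivity.
Qed.

Lemma countable_family_sub (X : Type) (S S' : (X -> Prop) -> Prop) :
  (forall A, S' A -> S A) -> countable_family S -> countable_family S'.
Proof. intros HS [f Hf]. exists f. auto. Qed.

Lemma locally_countable_closures (X : Type) (t : (X -> Prop) -> Prop)
  (V : (X -> Prop) -> Prop) :
  locally_countable t V ->
  locally_countable t (fun C => exists A, V A /\ C = closure t A).
Proof.
  intros HV x. destruct (HV x) as [G [HG [Gx HcG]]].
  exists G; split; [exact HG | split; [exact Gx |]].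
  apply (countable_family_sub _
           (fun C => exists A, (V A /\ exists y, G y /\ A y) /\ C = closure t A)).
  - intros C [[A [VA ->]] [y [Gy Cy]]].
    exists A; split; [split; [exact VA | exact (Cy G HG Gy)] | reflexivity].
  - exact (countable_family_image _ _ _ _ HcG).
Qed.

Section AlmostRegularCovers.

Variables (X : Type) (ti tj : (X -> Prop) -> Prop).

Definition shrinking (U : (X -> Prop) -> Prop) (V : X -> Prop) : Prop :=
  regular_open ti tj V /\ exists B, U B /\ forall x, closure tj V x -> B x.

Lemma shrinking_cover (U : (X -> Prop) -> Prop) :
  almost_regular ti tj -> (forall A, U A -> regular_open ti tj A) ->
  is_cover U -> is_cover (shrinking U).
Proof.
  intros Hreg HU Hcov x. destruct (Hcov x) as [B [UB Bx]].
  destruct (Hreg x B (HU B UB) Bx) as [V [HV [Vx [_ HVB]]]].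
  exists V; split; [split; [exact HV | exists B; auto] | exact Vx].
Qed.

Lemma closures_refine (U V : (X -> Prop) -> Prop) :
  refines V (shrinking U) -> refines (fun C => exists A, V A /\ C = closure tj A) U.
Proof.
  intros HV C [A [VA ->]]. destruct (HV A VA) as [W [[_ [B [UB HWB]]] HAW]].
  exists B; split; [exact UB |].
  intros x Hx. apply HWB. exact (closure_monotone _ _ _ _ HAW x Hx).
Qed.

End AlmostRegularCovers.

Theorem mainTheorem14 (X : Type) (tau1 tau2 : (X -> Prop) -> Prop)
  (H1 : is_topology tau1) (H2 : is_topology tau2)
  (i j : nat) (Hi : i = 1 \/ i = 2) (Hj : j = 1 \/ j = 2) (Hij : i <> j)
  (Hreg : almost_regular (tau tau1 tau2 i) (tau tau1 tau2 j))
  (Hed : extremely_disconnected (tau tau1 tau2 j) (tau tau1 tau2 i))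
  (HP : P_space (tau tau1 tau2 j)) :
  almost_paralindelof (tau tau1 tau2 i) (tau tau1 tau2 j) ->
  nearly_paralindelof (tau tau1 tau2 i) (tau tau1 tau2 j).
Proof.
  set (ti := tau tau1 tau2 i) in *. set (tj := tau tau1 tau2 j) in *.
  assert (Ti : is_topology ti) by (apply tau_topology; assumption).
  clearbody ti tj.
  intros Halmost U HU Hcov.
  destruct (Halmost (shrinking X ti tj U)) as [V [HVopen [HVlc [HVref HVcl]]]].
  - intros A [HA _]. exact (regular_open_open _ ti tj A Ti HA).
  - exact (shrinking_cover X ti tj U Hreg HU Hcov).
  - exists (fun C => exists A, V A /\ C = closure tj A).
    split; [| split; [| split]].
    + exact (closures_refine X ti tj U V HVref).
    + intros x. destruct (HVcl x) as [A [VA HA]]. exists (closure tj A); eauto.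
    + intros C [A [VA ->]]. exact (Hed A (HVopen A VA)).
    + exact (locally_countable_closures X tj V HVlc).
Qed.
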